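(* Let $F\in\mathbb{R}^{n\times n}$, $G\in\mathbb{R}^{n\times m}$, $K\in\mathbb{R}^{m\times n}$, $L\in\mathbb{R}^{n\times p}$ with $\rho[F]<1$ and $\rho[F+GK]<1$, let $\Sigma\in\mathbb{R}^{p\times p}$ be symmetric positive definite and $\alpha>0$. Consider $e_{k+1}^\delta=Fe_k^\delta-L\Sigma^{1/2}\bar\delta_k$ and $x_{k+1}^\delta=(F+GK)x_k^\delta-GKe_k^\delta$ for $k\ge k^*$, with $e_{k^*}^\delta=x_{k^*}^\delta=\mathbf{0}$ and inputs satisfying $\bar\delta_k^T\bar\delta_k\leq\alpha$ for all $k$. Then every value $x_k^\delta$, $k\ge k^*$, attainable under such inputs lies in $$\mathcal{E}_x^\delta=\bigoplus_{k=1}^{\infty}\mathcal{E}\big(\alpha\,H_kL\Sigma L^TH_k^T\big),\qquad H_k=(F+GK)^k-F^k.$$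
   Context: $\Sigma^{1/2}$ is the symmetric positive definite square root of $\Sigma$; $\rho[\cdot]$ is the spectral radius. For a symmetric positive semidefinite matrix $\mathcal{Q}$, $\mathcal{E}(\mathcal{Q})=\{\mathcal{Q}^{1/2}u:\ u^Tu\le 1\}$ (for positive definite $\mathcal{Q}$ this equals $\{\mu:\mu^T\mathcal{Q}^{-1}\mu\le1\}$). $\oplus$ denotes the Minkowski sum, and the infinite sum $\bigoplus_k\mathcal{E}_k$ is the set of all convergent sums $\sum_k y_k$ with $y_k\in\mathcal{E}_k$. *)

From HB Require Import structures.
From mathcomp Require Import all_boot all_order all_algebra.
From mathcomp Require Import complex.
From mathcomp Require Import all_classical all_reals all_analysis.
Set Implicit Arguments. Unset Strict Implicit. Unset Printing Implicit Defensive.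
Import Order.TTheory GRing.Theory Num.Theory.
Import numFieldNormedType.Exports.
Local Open Scope ring_scope.
Local Open Scope classical_set_scope.

Section Defs.
Variable R : realType.

Definition eigenvalues (n : nat) (A : 'M[R]_n) : set R[i] :=
  [set z | root (char_poly (map_mx (fun a : R => (a%:C)%C) A)) z].

Definition spectral_radius (n : nat) (A : 'M[R]_n) : R :=
  sup [set r : R | exists2 z, eigenvalues A z & (r%:C)%C = `|z|].

Definition symmetric (n : nat) (A : 'M[R]_n) : Prop := A^T = A.
Definition psd (n : nat) (A : 'M[R]_n) : Prop :=
  symmetric A /\ forall v : 'cV[R]_n, 0 <= (v^T *m A *m v) 0 0.
Definition pd (n : nat) (A : 'M[R]_n) : Prop :=
  symmetric A /\ forall v : 'cV[R]_n, v != 0 -> 0 < (v^T *m A *m v) 0 0.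

Definition is_psd_sqrt (n : nat) (A S : 'M[R]_n) : Prop := psd S /\ S *m S = A.
Definition is_pd_sqrt (n : nat) (A S : 'M[R]_n) : Prop := pd S /\ S *m S = A.

Definition ellipsoid (n : nat) (Q : 'M[R]_n) : set 'cV[R]_n :=
  [set x | exists S, is_psd_sqrt Q S /\
           exists2 u : 'cV[R]_n, (u^T *m u) 0 0 <= 1 & x = S *m u].

(* infinite Minkowski sum (+)_{k>=1} E_k : all convergent sums sum_{k>=1} y_k,
   y_k in E_k.  Here the family is indexed from 0, i.e. E' j = E_{j+1}. *)
Definition minkowski_series (n : nat) (E : nat -> set 'cV[R]_n) : set 'cV[R]_n :=
  [set s : 'cV[R]_n | exists y : nat -> 'cV[R]_n,
     (forall j, E j (y j)) /\ series y @ \oo --> s].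

End Defs.

(* With zero initial state both recursions are driven by the single input
   w_k = L Sigma^(1/2) dbar_k: x - e obeys the closed-loop recursion with input
   w and e the open-loop one with input -w, so x_k is the finite convolution
   sum_(i < k - k* ) H_i w_(k-i-1), whose i = 0 term vanishes.  Each term is M d with
   M = sqrt(alpha) H_i L Sigma^(1/2) and |d| <= 1, and M d lies in E(M M^T):
   writing (M M^T)^(1/2) and its pseudo-inverse T as polynomials in M M^T
   (interpolation on the spectrum), u = T M d satisfies (M M^T)^(1/2) u = M d,
   and |u| <= |d| because T M is a partial isometry. *)

From HB Require Import structures.
From mathcomp Require Import all_boot all_order all_algebra.
From mathcomp Require Import complex.
From mathcomp Require Import all_classical all_reals all_analysis.
Import Order.TTheory GRing.Theory Num.Theory.
Import numFieldNormedType.Exports.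
Local Open Scope ring_scope.
Local Open Scope classical_set_scope.
Set Implicit Arguments.
Unset Strict Implicit.
Unset Printing Implicit Defensive.

Lemma exists_interp_poly (F : fieldType) (f : F -> F) (s : seq F) :
  exists p : {poly F}, {in s, forall a, p.[a] = f a}.
Proof.
elim: s => [|b s [p p_s]]; first by exists 0.
have [b_s|b_s] := boolP (b \in s).
  by exists p => a; rewrite inE => /predU1P[->|]; apply: p_s.
pose P := \prod_(c <- s) ('X - c%:P).
have P_s : {in s, forall a, P.[a] = 0}.
  by move=> a a_s; apply/eqP; rewrite -/(root P a) root_prod_XsubC.
have Pb_neq0 : P.[b] != 0.
  rewrite horner_prod prodf_seq_neq0; apply/allP => c c_s /=.
  by rewrite hornerXsubC subr_eq0; apply: contra b_s => /eqP ->.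
exists (p + ((f b - p.[b]) / P.[b]) *: P) => a; rewrite hornerD hornerZ.
case/predU1P=> [->|a_s]; first by rewrite mulfVK // addrC subrK.
by rewrite (P_s a a_s) mulr0 addr0 p_s.
Qed.

Lemma trmx_horner_mx (R : comNzRingType) n (A : 'M[R]_n.+1) (r : {poly R}) :
  A^T = A -> (horner_mx A r)^T = horner_mx A r.
Proof.
move=> A_sym; elim/poly_ind: r => [|r c IHr]; first by rewrite rmorph0 trmx0.
rewrite rmorphD rmorphM /= horner_mx_X horner_mx_C linearD /= tr_scalar_mx.
by rewrite -mulmxE trmx_mul IHr A_sym (comm_mx_horner r (erefl (A *m A))).
Qed.

Section SymmetricFunctionalCalculus.
Variables (R : realType) (n : nat) (A : 'M[R]_n.+1).

Let AC := map_mx (real_complex R) A.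

(* The eigenvalues of A, read off the complex spectral theorem; they are real
   because A is symmetric (spectral_diagE). *)
Definition spectral_value (i : 'I_n.+1) : R := complex.Re (spectral_diag AC 0 i).

Hypothesis A_sym : A^T = A.

Let AC_real : AC \is a realmx.
Proof. by apply/mxOverP => i j; rewrite mxE; apply/complex_realP; eexists. Qed.

Let AC_sym : AC \is symmetricmx.
Proof.
apply/is_hermitianmxP; rewrite expr0 scale1r.
by rewrite map_mx_id // /AC map_trmx A_sym.
Qed.

Lemma spectral_diagE i : spectral_diag AC 0 i = (spectral_value i)%:C%C.
Proof.
rewrite /spectral_value RRe_real //.
have AC_herm := realsym_hermsym AC_sym AC_real.
by have /mxOverP := hermitian_spectral_diag_real AC_herm; apply.
Qed.

Lemma spectral_decomposition :
  AC = invmx (spectralmx AC) *m diag_mx (spectral_diag AC) *m spectralmx AC.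
Proof. exact/orthomx_spectralP/symmetric_normalmx/AC_real/AC_sym. Qed.

Lemma horner_mx_eq_on_spectrum (r1 r2 : {poly R}) :
  (forall i, r1.[spectral_value i] = r2.[spectral_value i]) ->
  horner_mx A r1 = horner_mx A r2.
Proof.
move=> r12; apply: (@map_mx_inj _ _ (real_complex R)).
rewrite !map_horner_mx -/AC spectral_decomposition.
rewrite !horner_mx_uconjC ?spectral_unit // !horner_mx_diag.
congr (_ *m diag_mx _ *m _); apply/matrixP => i j.
by rewrite !mxE (ord1 i) spectral_diagE !horner_map /= r12.
Qed.

End SymmetricFunctionalCalculus.

Lemma trmx_gram (R : comNzRingType) n p (M : 'M[R]_(n, p)) : (M *m M^T)^T = M *m M^T.
Proof. by rewrite trmx_mul trmxK. Qed.

Lemma spectral_value_gram_ge0 (R : realType) n p (M : 'M[R]_(n.+1, p)) i :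
  0 <= spectral_value (M *m M^T) i.
Proof.
set QC := map_mx (real_complex R) (M *m M^T).
set P := spectralmx QC; set MC := map_mx (real_complex R) M.
have QCE : QC = MC *m map_mx Num.conj MC^T.
  rewrite /QC map_mxM map_trmx realmxC //.
  by apply/mxOverP => a b; rewrite mxE; apply/complex_realP; eexists.
have diagE : diag_mx (spectral_diag QC) = P *m QC *m invmx P.
  rewrite [QC in RHS](spectral_decomposition (trmx_gram M)) -/P.
  rewrite !mulmxA mulmxV ?spectral_unit // mul1mx.
  by rewrite -mulmxA mulmxV ?spectral_unit // mulmx1.
rewrite -ler0c -spectral_diagE ?trmx_gram // -/QC.
rewrite (_ : spectral_diag QC 0 i = diag_mx (spectral_diag QC) i i); last first.
  by rewrite mxE eqxx mulr1n.
rewrite diagE invmx_unitary ?spectral_unitarymx // QCE -!mulmxA mulmxA.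
rewrite -[map_mx Num.conj MC^T *m _]map_mxM -[MC^T *m _]trmx_mul mxE.
by apply: sumr_ge0 => k _; rewrite !mxE mul_conjC_ge0.
Qed.

Lemma sqnorm_ge0 (R : realDomainType) k (v : 'cV[R]_k) : 0 <= (v^T *m v) 0 0.
Proof. by rewrite mxE; apply: sumr_ge0 => i _; rewrite mxE -expr2 sqr_ge0. Qed.

Lemma gram_eq0 (R : realDomainType) k l (Z : 'M[R]_(k, l)) : Z *m Z^T = 0 -> Z = 0.
Proof.
move=> /matrixP ZZT0; apply/matrixP => i j; have /eqP := ZZT0 i i.
rewrite !mxE psumr_eq0 => [/allP/(_ j (mem_index_enum _))|k0 _]; rewrite mxE.
  by rewrite mulf_eq0 orbb => /eqP.
by rewrite -expr2 sqr_ge0.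
Qed.

(* With P := E^T E a symmetric projection, |d|^2 - |E d|^2 = |(1 - P) d|^2. *)
Lemma partial_isometry_contraction (R : realDomainType) k l
    (E : 'M[R]_(k, l)) (d : 'cV[R]_l) :
  E *m E^T *m E = E -> ((E *m d)^T *m (E *m d)) 0 0 <= (d^T *m d) 0 0.
Proof.
move=> EEtE; set P := E^T *m E.
have P_sym : P^T = P by rewrite trmx_mul trmxK.
have P_idem : P *m P = P by rewrite /P -mulmxA [E *m _]mulmxA EEtE.
have PC_idem : (1%:M - P) *m (1%:M - P) = 1%:M - P.
  by rewrite mulmxBr mulmx1 mulmxBl mul1mx P_idem subrr subr0.
have PC_sym : (1%:M - P)^T = 1%:M - P by rewrite linearB /= trmx1 P_sym.
have := sqnorm_ge0 ((1%:M - P) *m d).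
rewrite trmx_mul PC_sym -mulmxA (mulmxA (1%:M - P)) PC_idem.
by rewrite mulmxBl mul1mx mulmxBr trmx_mul /P !mulmxA mxE [X in _ + X]mxE subr_ge0.
Qed.

Section GramSquareRoot.
Variables (R : realType) (n p : nat) (M : 'M[R]_(n.+1, p)) (r s : {poly R}).

Let Q := M *m M^T.
Local Notation hQ := (horner_mx Q).
Local Notation lam := (spectral_value Q).

Hypothesis r_spec : forall i, r.[lam i] = Num.sqrt (Num.sqrt (lam i)).
Hypothesis s_spec : forall i, s.[lam i] = (Num.sqrt (lam i))^-1.

(* hQ (r * r) is the square root of Q and, as (Num.sqrt 0)^-1 = 0, hQ s is the
   pseudo-inverse of that square root. *)

Let Q_sym : Q^T = Q := trmx_gram M.

Let hQX : hQ 'X = Q := horner_mx_X Q.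

Let hQ_sym (t : {poly R}) : (hQ t)^T = hQ t := trmx_horner_mx t Q_sym.

Let lam_ge0 i : 0 <= lam i := spectral_value_gram_ge0 M i.

Let sqrt_lam_neq0 i : lam i != 0 -> Num.sqrt (lam i) != 0.
Proof. by rewrite sqrtr_eq0 -ltNge lt_def => ->; apply: lam_ge0. Qed.

Let hQ_gram (t u : {poly R}) : hQ t *m M *m (hQ u *m M)^T = hQ (t * 'X * u).
Proof.
rewrite trmx_mul hQ_sym -mulmxA (mulmxA M) -/Q.
by rewrite !rmorphM /= hQX !mulmxE mulrA.
Qed.

Lemma gram_sqrt_psd : is_psd_sqrt Q (hQ (r * r)).
Proof.
split; first split.
- exact: hQ_sym.
- move=> v; rewrite rmorphM -mulmxE.
  have -> : v^T *m (hQ r *m hQ r) *m v = (hQ r *m v)^T *m (hQ r *m v).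
    by rewrite trmx_mul hQ_sym !mulmxA.
  exact: sqnorm_ge0.
rewrite mulmxE -rmorphM -[RHS]hQX; apply: horner_mx_eq_on_spectrum => // i.
by rewrite hornerX !hornerM r_spec -!expr2 sqr_sqrtr ?sqrtr_ge0 // sqr_sqrtr.
Qed.

Lemma gram_sqrt_factor : hQ (r * r) *m (hQ s *m M) = M.
Proof.
apply/eqP; rewrite -subr_eq0 mulmxA -[X in _ - X]mul1mx -mulmxBl; apply/eqP.
apply: gram_eq0.
have -> : hQ (r * r) *m hQ s - 1%:M = hQ (r * r * s - 1).
  by rewrite mulmxE -rmorphM rmorphB (rmorph1 hQ).
rewrite hQ_gram -(rmorph0 hQ); apply: horner_mx_eq_on_spectrum => // i.
rewrite !hornerE r_spec s_spec -expr2 sqr_sqrtr ?sqrtr_ge0 //.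
have [->|lam_neq0] := eqVneq (lam i) 0; first by rewrite !(mulr0, mul0r).
by rewrite mulfV ?sqrt_lam_neq0 // subrr !mul0r.
Qed.

Lemma gram_factor_partial_isometry :
  let W := hQ s *m M in W *m W^T *m W = W.
Proof.
rewrite /= hQ_gram mulmxA mulmxE -rmorphM; congr (_ *m M).
apply: horner_mx_eq_on_spectrum => // i; rewrite !hornerE s_spec.
have [->|lam_neq0] := eqVneq (lam i) 0; first by rewrite sqrtr0 invr0 !mul0r.
rewrite -{2}(sqr_sqrtr (lam_ge0 i)) expr2 !mulrA mulVf ?sqrt_lam_neq0 //.
by rewrite mul1r mulfV ?sqrt_lam_neq0 // mul1r.
Qed.
End GramSquareRoot.

Lemma gram_mulmx_in_ellipsoid (R : realType) n p (M : 'M[R]_(n, p)) (d : 'cV[R]_p) :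
  (d^T *m d) 0 0 <= 1 -> ellipsoid (M *m M^T) (M *m d).
Proof.
move=> d_le1; case: n M => [|n] M.
  exists 0; split; last by exists 0; [rewrite mulmx0 mxE | rewrite !flatmx0].
  split; last by rewrite !flatmx0.
  by split=> [|v]; [exact: trmx0 | rewrite mulmx0 mul0mx mxE].
set lam := spectral_value (M *m M^T).
have interp (f : R -> R) : exists t : {poly R}, forall i, t.[lam i] = f (lam i).
  have [t t_f] := exists_interp_poly f [seq lam i | i <- enum 'I_n.+1].
  by exists t => i; apply/t_f/map_f; rewrite mem_enum.
have [r r_spec] := interp (fun a => Num.sqrt (Num.sqrt a)).
have [s s_spec] := interp (fun a => (Num.sqrt a)^-1).
exists (horner_mx (M *m M^T) (r * r)); split; first exact: gram_sqrt_psd.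
exists (horner_mx (M *m M^T) s *m M *m d).
  exact/(le_trans _ d_le1)/partial_isometry_contraction/gram_factor_partial_isometry.
by rewrite mulmxA (gram_sqrt_factor r_spec s_spec).
Qed.

Lemma mulmx_sqrt_in_ellipsoid (R : realType) n p (B : 'M[R]_(n, p))
    (S Sigma : 'M[R]_p) (alpha : R) (d : 'cV[R]_p) :
  S^T = S -> S *m S = Sigma -> 0 < alpha -> (d^T *m d) 0 0 <= alpha ->
  ellipsoid (alpha *: (B *m Sigma *m B^T)) (B *m S *m d).
Proof.
move=> S_sym S_sq alpha_gt0 d_le; set c := Num.sqrt alpha.
have c_gt0 : 0 < c by rewrite sqrtr_gt0.
have c2 : c ^+ 2 = alpha by rewrite sqr_sqrtr ?ltW.
have -> : alpha *: (B *m Sigma *m B^T) = (c *: (B *m S)) *m (c *: (B *m S))^T.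
  rewrite linearZ /= -scalemxAl -scalemxAr scalerA -expr2 c2.
  by rewrite trmx_mul S_sym -S_sq !mulmxA.
have -> : B *m S *m d = (c *: (B *m S)) *m (c^-1 *: d).
  by rewrite -scalemxAl -scalemxAr scalerA mulfV ?gt_eqF // scale1r.
apply: gram_mulmx_in_ellipsoid.
rewrite !linearZ /= -scalemxAl scalerA mxE -expr2 exprVn c2.
by rewrite mulrC ler_pdivrMr // mul1r.
Qed.

Lemma minkowski_series_finite (R : realType) n (E : nat -> set 'cV[R]_n)
    (y : nat -> 'cV[R]_n) t :
  (forall j, E j (y j)) -> (forall j, (t <= j)%N -> y j = 0) ->
  minkowski_series E (\sum_(j < t) y j).
Proof.
move=> Ey y0; exists y; split=> //; apply: cvg_near_cst; exists t => // N /= t_le.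
rewrite seriesEord /= -(subnKC t_le) big_split_ord /= [X in _ + X]big1 ?addr0 // => j _.
by apply: y0; rewrite leq_addr.
Qed.

Lemma linear_recursion_sum (R : pzRingType) n (A : 'M[R]_n) (b z : nat -> 'cV[R]_n) k0 :
  z k0 = 0 -> (forall k, (k0 <= k)%N -> z k.+1 = A *m z k + b k) ->
  forall k, (k0 <= k)%N -> z k = \sum_(i < k - k0) A ^+ i *m b (k - i.+1)%N.
Proof.
move=> z0 z_rec k /subnKC <-; rewrite addKn; elim: (k - k0)%N => [|t IHt].
  by rewrite addn0 z0 big_ord0.
rewrite addnS z_rec ?leq_addr // IHt big_ord_recl /= expr0 mul1mx subSS subn0.
rewrite addrC mulmx_sumr; congr (_ + _); apply: eq_bigr => i _.
by rewrite exprS -mulmxE mulmxA /bump /= add1n subSS.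
Qed.

Lemma closed_loop_response (R : pzRingType) n m (F : 'M[R]_n) (G : 'M[R]_(n, m))
    (K : 'M[R]_(m, n)) (w e x : nat -> 'cV[R]_n) k0 :
  e k0 = 0 -> x k0 = 0 ->
  (forall k, (k0 <= k)%N -> e k.+1 = F *m e k - w k) ->
  (forall k, (k0 <= k)%N -> x k.+1 = (F + G *m K) *m x k - G *m K *m e k) ->
  forall k, (k0 <= k)%N ->
    x k = \sum_(i < k - k0) ((F + G *m K) ^+ i - F ^+ i) *m w (k - i.+1)%N.
Proof.
move=> e0 x0 e_rec x_rec k k_ge; pose z j := x j - e j.
have z_rec j : (k0 <= j)%N -> z j.+1 = (F + G *m K) *m z j + w j.
  move=> j_ge; rewrite /z x_rec // e_rec // mulmxBr (mulmxDl F _ (e j)).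
  by rewrite opprB addrA opprD addrA [LHS]addrAC; congr (_ + _); apply: addrAC.
rewrite -[x k](subrK (e k)) -/(z k).
rewrite (linear_recursion_sum (b := w) _ z_rec k_ge); last by rewrite /z x0 e0 subrr.
rewrite (linear_recursion_sum (b := fun j => - w j) e0 e_rec k_ge) -big_split.
by apply: eq_bigr => i _; rewrite mulmxN mulmxBl.
Qed.

Theorem theorem3 (R : realType) (n m p : nat)
  (F : 'M[R]_n) (G : 'M[R]_(n, m)) (K : 'M[R]_(m, n)) (L : 'M[R]_(n, p))
  (Sigma Sigma_half : 'M[R]_p) (alpha : R) (kstar : nat)
  (dbar : nat -> 'cV[R]_p) (e x : nat -> 'cV[R]_n) :
  spectral_radius F < 1 ->
  spectral_radius (F + G *m K) < 1 ->
  pd Sigma ->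
  is_pd_sqrt Sigma Sigma_half ->
  0 < alpha ->
  (forall k, ((dbar k)^T *m dbar k) 0 0 <= alpha) ->
  e kstar = 0 -> x kstar = 0 ->
  (forall k, (kstar <= k)%N ->
     e k.+1 = F *m e k - L *m Sigma_half *m dbar k) ->
  (forall k, (kstar <= k)%N ->
     x k.+1 = (F + G *m K) *m x k - G *m K *m e k) ->
  let H := fun k : nat => (F + G *m K) ^+ k - F ^+ k in
  forall k, (kstar <= k)%N ->
    minkowski_series
      (fun j => ellipsoid (alpha *: (H j.+1 *m L *m Sigma *m L^T *m (H j.+1)^T)))
      (x k).
Proof.
move=> _ _ _ [[Sh_sym _] Sh_sq] alpha_gt0 d_le e0 x0 e_rec x_rec H k k_ge.
have x_sum := closed_loop_response
  (w := fun j => L *m Sigma_half *m dbar j) e0 x0 e_rec x_rec k_ge.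
pose u i := if (i < k - kstar)%N then dbar (k - i.+1)%N else 0.
have u_le i : ((u i)^T *m u i) 0 0 <= alpha.
  by rewrite /u; case: ifP => _; [apply: d_le | rewrite mulmx0 mxE ltW].
pose y j := H j.+1 *m L *m Sigma_half *m u j.+1.
have -> : x k = \sum_(j < k - kstar) y j.
  rewrite x_sum /y /u; case: (k - kstar)%N => [|t]; first by rewrite !big_ord0.
  rewrite big_ord_recl big_ord_recr /= !expr0 subrr mul0mx add0r.
  rewrite ltnn mulmx0 addr0; apply: eq_bigr => i _.
  by rewrite ltnS ltn_ord !mulmxA.
apply: (@minkowski_series_finite _ _ _ y) => [j|j t_le].
  have := mulmx_sqrt_in_ellipsoid (H j.+1 *m L) Sh_sym Sh_sq alpha_gt0 (u_le j.+1).
  by rewrite trmx_mul !mulmxA.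
by rewrite /y /u ltnNge (leq_trans t_le) // mulmx0.
Qed.
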